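(* Let $k\in\{-1,0,1\}$, $R_b>0$ (with $R_b<1$ if $k=1$), $\beta>0$, $\varepsilon\in\{1,-1\}$, and let $a>0$, $\phi$ be functions of $t$ with $\dot\phi=-3\beta/a^3$. Let $m(t,R)$ satisfy $m(t,R)=m(0,R)+\frac{R^3}{2}\beta t$. Let $t=t(w)$ be a function with $\dot t(w)=\frac{dt}{dw}>0$, set $r_\Sigma(w)=a(t(w))R_b$, $M(w)=m(t(w),R_b)$, $\Lambda(w)=\phi(t(w))$, and consider the Vaidya type metric \[ g_{\mathrm{ext}}=-\Big(1-\frac{2M(w)}{r}-\frac{\Lambda(w)}{3}r^2\Big)dw^2+2\varepsilon\,dw\,dr+r^2d\Omega^2,\qquad r\ge r_\Sigma(w), \] whose energy density (solving $R_{\mu\nu}-\frac12g_{\mu\nu}\mathcal R+\Lambda(w)g_{\mu\nu}=\tilde\rho\, dw^2$) is \[ \tilde\rho(w,r)=\frac{\varepsilon}{r^2}\Big(2\frac{dM}{dw}+\frac{r^3}{3}\frac{d\Lambda}{dw}\Big). \] Then $\tilde\rho(w,r_\Sigma(w))=0$, and the weak energy condition $\tilde\rho(w,r)>0$ for all $r>r_\Sigma(w)$ holds if and only if $\varepsilon=-1$ (the outgoing Vaidya metric).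
   Context: $d\Omega^2=d\theta^2+\sin^2\theta\,d\psi^2$. $w$ is an advanced null coordinate for $\varepsilon=1$ and a retarded one for $\varepsilon=-1$. *)

From Stdlib Require Import Reals Lra.
From Coquelicot Require Import Coquelicot.
Open Scope R_scope.

Definition Mext (m : R -> R -> R) (tw : R -> R) (Rb : R) (w : R) : R :=
  m (tw w) Rb.
Definition Lambdaext (phi : R -> R) (tw : R -> R) (w : R) : R := phi (tw w).
Definition rSigma (a : R -> R) (tw : R -> R) (Rb : R) (w : R) : R :=
  a (tw w) * Rb.

Definition rho_tilde (eps : R) (M Lam : R -> R) (w r : R) : R :=
  eps / r ^ 2 * (2 * Derive M w + r ^ 3 / 3 * Derive Lam w).

(** Along the Vaidya exterior, [dM/dw = Rb^3 beta t'/2] and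
    [dLambda/dw = -3 beta t'/a^3], so
    [rho(w,r) = eps beta t' (rSigma^3 - r^3) / (a^3 r^2)].
    The density therefore vanishes on the boundary [r = rSigma], and for
    [r > rSigma] its sign is that of [-eps], since [beta t' / a^3 > 0]. *)
From Stdlib Require Import Reals ZArith Lra.
From Coquelicot Require Import Coquelicot.
Open Scope R_scope.

Lemma Derive_Mext (m : R -> R -> R) (tw : R -> R) (Rb beta w : R) :
  (forall t Rr, m t Rr = m 0 Rr + Rr ^ 3 / 2 * beta * t) ->
  ex_derive tw w ->
  Derive (Mext m tw Rb) w = Rb ^ 3 / 2 * beta * Derive tw w.
Proof.
  intros hm hd; apply is_derive_unique.
  apply (is_derive_ext (fun v => m 0 Rb + Rb ^ 3 / 2 * beta * tw v)).
  { intro v; unfold Mext; now rewrite (hm (tw v)). }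
  auto_derive; [exact hd |].
  replace (Derive (fun v => tw v) w) with (Derive tw w) by reflexivity; field.
Qed.

Lemma Derive_Lambdaext (phi tw : R -> R) (dphi : R -> R) (w : R) :
  (forall t, is_derive phi t (dphi t)) ->
  ex_derive tw w ->
  Derive (Lambdaext phi tw) w = Derive tw w * dphi (tw w).
Proof.
  intros hphi hd; apply is_derive_unique.
  exact (is_derive_comp phi tw w _ _ (hphi (tw w)) (Derive_correct tw w hd)).
Qed.

Lemma rho_tilde_matched (Rb beta eps A dt w r : R) (M Lam : R -> R) :
  A <> 0 -> r <> 0 ->
  Derive M w = Rb ^ 3 / 2 * beta * dt ->
  Derive Lam w = dt * (- 3 * beta / A ^ 3) ->
  rho_tilde eps M Lam w r
  = - eps * (beta * dt / (A ^ 3 * r ^ 2)) * (r ^ 3 - (A * Rb) ^ 3).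
Proof.
  intros hA hr hM hL; unfold rho_tilde; rewrite hM, hL; field; auto.
Qed.

Lemma cube_lt_cube (s r : R) : 0 <= s -> s < r -> s ^ 3 < r ^ 3.
Proof.
  intros hs hsr.
  assert (hprod : 0 < (r - s) * (r * r + r * s + s * s))
    by (apply Rmult_lt_0_compat; nra).
  simpl; nra.
Qed.

Section VaidyaExterior.

Variables (Rb beta eps : R) (a phi tw : R -> R) (m : R -> R -> R).
Hypothesis hRb : 0 < Rb.
Hypothesis hbeta : 0 < beta.
Hypothesis ha : forall t, 0 < a t.
Hypothesis hphi : forall t, is_derive phi t (- 3 * beta / (a t) ^ 3).
Hypothesis hm : forall t Rr, m t Rr = m 0 Rr + Rr ^ 3 / 2 * beta * t.
Hypothesis htw : forall w, ex_derive tw w /\ 0 < Derive tw w.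

Lemma rho_tilde_Vaidya w r : r <> 0 ->
  rho_tilde eps (Mext m tw Rb) (Lambdaext phi tw) w r
  = - eps * (beta * Derive tw w / (a (tw w) ^ 3 * r ^ 2))
      * (r ^ 3 - rSigma a tw Rb w ^ 3).
Proof.
  intro hr; destruct (htw w) as [hd _].
  apply rho_tilde_matched; auto.
  - exact (Rgt_not_eq _ _ (ha (tw w))).
  - exact (Derive_Mext m tw Rb beta w hm hd).
  - exact (Derive_Lambdaext phi tw _ w hphi hd).
Qed.

Lemma rSigma_pos w : 0 < rSigma a tw Rb w.
Proof. unfold rSigma; pose proof (ha (tw w)); nra. Qed.

Lemma rho_tilde_boundary w :
  rho_tilde eps (Mext m tw Rb) (Lambdaext phi tw) w (rSigma a tw Rb w) = 0.
Proof.
  rewrite rho_tilde_Vaidya; [ring | exact (Rgt_not_eq _ _ (rSigma_pos w))].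
Qed.

Lemma rho_tilde_outside w r : r > rSigma a tw Rb w ->
  exists P, 0 < P /\
    rho_tilde eps (Mext m tw Rb) (Lambdaext phi tw) w r = - eps * P.
Proof.
  intro hr; pose proof (rSigma_pos w) as hs; destruct (htw w) as [_ hdt].
  rewrite rho_tilde_Vaidya by lra.
  exists (beta * Derive tw w / (a (tw w) ^ 3 * r ^ 2)
          * (r ^ 3 - rSigma a tw Rb w ^ 3)).
  split; [| ring].
  apply Rmult_lt_0_compat.
  - apply Rdiv_lt_0_compat; [nra |].
    apply Rmult_lt_0_compat; apply pow_lt; [exact (ha (tw w)) | lra].
  - pose proof (cube_lt_cube _ _ (Rlt_le _ _ hs) hr); lra.
Qed.

End VaidyaExterior.

Theorem mainTheorem3
  (k : Z) (Rb beta eps : R) (a phi tw : R -> R) (m : R -> R -> R)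
  (hk : k = (-1)%Z \/ k = 0%Z \/ k = 1%Z)
  (hRb : 0 < Rb) (hRb1 : k = 1%Z -> Rb < 1)
  (hbeta : 0 < beta)
  (heps : eps = 1 \/ eps = -1)
  (ha : forall t, 0 < a t)
  (hphi : forall t, is_derive phi t (- 3 * beta / (a t) ^ 3))
  (hm : forall t Rr, m t Rr = m 0 Rr + Rr ^ 3 / 2 * beta * t)
  (htw : forall w, ex_derive tw w /\ 0 < Derive tw w) :
  (forall w,
     rho_tilde eps (Mext m tw Rb) (Lambdaext phi tw) w (rSigma a tw Rb w) = 0)
  /\
  ((forall w r, r > rSigma a tw Rb w ->
      rho_tilde eps (Mext m tw Rb) (Lambdaext phi tw) w r > 0)
   <-> eps = -1).
Proof.
  (* [k] and [Rb < 1] only constrain the interior region. *)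
  split; [exact (rho_tilde_boundary Rb beta eps a phi tw m hRb ha hphi hm htw) |].
  pose proof (rho_tilde_outside Rb beta eps a phi tw m hRb hbeta ha hphi hm htw)
    as rho_out.
  split.
  - intro hwec; destruct heps as [e1 | em1]; [exfalso | exact em1].
    set (r := rSigma a tw Rb 0 + 1).
    assert (hr : r > rSigma a tw Rb 0) by (unfold r; lra).
    destruct (rho_out 0 r hr) as [P [hP hrho]].
    pose proof (hwec 0 r hr); rewrite hrho, e1 in *; lra.
  - intros em1 w r hr; destruct (rho_out w r hr) as [P [hP ->]]; rewrite em1; lra.
Qed.
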